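(* Let $n\ge3$, $1\le i\le n-2$ and $j=i+1$. In the group algebra $\mathbb{Q}(t_0,t_1)[B_n]$, let $I$ be the two-sided ideal generated by the elements \[ s_k^2+(1-t_0-t_1)s_k+(t_0t_1-t_0-t_1)\cdot1+t_0t_1\,\overline{s}_k,\qquad k=1,\dots,n-1. \] Let \[ X=\overline{s}_is_js_i-s_is_j\overline{s}_i-\overline{s}_i\overline{s}_js_i+s_i\overline{s}_j\overline{s}_i-\big(s_is_j-s_i\overline{s}_j-\overline{s}_is_j+\overline{s}_i\overline{s}_j-s_js_i+s_j\overline{s}_i+\overline{s}_js_i-\overline{s}_j\overline{s}_i\big) \] and $Y=s_j\overline{s}_is_j-Z$, where \[ \begin{aligned} Z={}&(t_0t_1+1-t_0-t_1)s_i+(t_0+t_1-t_0t_1-1)\overline{s}_i-(t_0+t_1-1)s_is_j+(t_0+t_1-1)\overline{s}_is_j+t_0t_1\,s_i\overline{s}_j-t_0t_1\,\overline{s}_i\overline{s}_j\\ &+s_js_i-s_j\overline{s}_i-(t_0+t_1-t_0t_1)\overline{s}_js_i+(t_0+t_1-t_0t_1)\overline{s}_j\overline{s}_i-(t_0+t_1)s_is_j\overline{s}_i+(t_0+t_1)s_i\overline{s}_j\overline{s}_i\\ &+s_is_js_i-t_0t_1\,\overline{s}_i\overline{s}_j\overline{s}_i+t_0t_1\,\overline{s}_js_i\overline{s}_j. \end{aligned} \] Then the two-sided ideal generated by $I$ and $X$ equals the two-sided ideal generated by $I$ and $Y$; that is, the relation $X=0$ is equivalent to the relation $Y=0$ modulo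 the relations generating $I$.
   Context: $B_n$ is the Artin braid group with standard generators $s_1,\dots,s_{n-1}$ and $\overline{s}_k=s_k^{-1}$; $\mathbb{Q}(t_0,t_1)[B_n]$ is its group algebra over the field of rational functions in two variables. *)

From HB Require Import structures.
From mathcomp Require Import all_boot all_order all_algebra.
Set Implicit Arguments. Unset Strict Implicit. Unset Printing Implicit Defensive.
Import GRing.Theory.
Local Open Scope ring_scope.

Definition Qt := {fraction {poly {poly rat}}}.
Definition t0 : Qt := tofrac (('X : {poly rat})%:P).
Definition t1 : Qt := tofrac ('X : {poly {poly rat}}).

(* A family (s k, sb k)_(1 <= k <= n-1) in a Qt-algebra A realising a
   representation of B_n (equivalently, a Qt-algebra morphism
   Qt[B_n] -> A with s_k |-> s k, \bar s_k |-> sb k). *)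
Definition braid_family (n : nat) (A : algType Qt) (s sb : nat -> A) : Prop :=
  (forall k, (1 <= k <= n.-1)%N -> s k * sb k = 1 /\ sb k * s k = 1) /\
  (forall k, (1 <= k)%N -> (k.+1 <= n.-1)%N ->
     s k * s k.+1 * s k = s k.+1 * s k * s k.+1) /\
  (forall k l, (1 <= k <= n.-1)%N -> (1 <= l <= n.-1)%N -> (k.+1 < l)%N ->
     s k * s l = s l * s k).

(* The generators of the ideal I vanish. *)
Definition cubic_rel (n : nat) (A : algType Qt) (s sb : nat -> A) : Prop :=
  forall k, (1 <= k <= n.-1)%N ->
    s k ^+ 2 + (1 - t0 - t1) *: s k + (t0 * t1 - t0 - t1) *: (1 : A)
      + (t0 * t1) *: sb k = 0.

Definition relX (A : algType Qt) (s sb : nat -> A) (i : nat) : A :=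
  let j := i.+1 in
  sb i * s j * s i - s i * s j * sb i - sb i * sb j * s i + s i * sb j * sb i
  - (s i * s j - s i * sb j - sb i * s j + sb i * sb j
     - s j * s i + s j * sb i + sb j * s i - sb j * sb i).

Definition relZ (A : algType Qt) (s sb : nat -> A) (i : nat) : A :=
  let j := i.+1 in
  (t0 * t1 + 1 - t0 - t1) *: s i + (t0 + t1 - t0 * t1 - 1) *: sb i
  - (t0 + t1 - 1) *: (s i * s j) + (t0 + t1 - 1) *: (sb i * s j)
  + (t0 * t1) *: (s i * sb j) - (t0 * t1) *: (sb i * sb j)
  + s j * s i - s j * sb i - (t0 + t1 - t0 * t1) *: (sb j * s i)
  + (t0 + t1 - t0 * t1) *: (sb j * sb i)
  - (t0 + t1) *: (s i * s j * sb i) + (t0 + t1) *: (s i * sb j * sb i)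
  + s i * s j * s i - (t0 * t1) *: (sb i * sb j * sb i)
  + (t0 * t1) *: (sb j * s i * sb j).

Definition relY (A : algType Qt) (s sb : nat -> A) (i : nat) : A :=
  s i.+1 * sb i * s i.+1 - relZ s sb i.

(* Right-multiplying X by s_j and reducing every word with the braid relation
   between s_i and s_j (and the inverse relations it implies), then removing
   s_j^2 by the quadratic relation that the generator of I imposes on s_j,
   yields exactly -Y.  So X s_j + Y lies in I, and as s_j is invertible, X
   and Y generate the same ideal modulo I. *)
From HB Require Import structures.
From mathcomp Require Import all_boot all_order all_algebra ring zify.
Set Implicit Arguments. Unset Strict Implicit. Unset Printing Implicit Defensive.
Import GRing.Theory.
Local Open Scope ring_scope.

(* In the trivial extension F ⋉ V, linear identities between vectors of V
   become ring identities, which [ring] can check. *)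
Section TrivialExtension.
Variables (F : comNzRingType) (V : lmodType F).

Definition triv_ext : Type := (F * V)%type.
HB.instance Definition _ := GRing.Zmodule.on triv_ext.

Definition triv_one : triv_ext := (1, 0).
Definition triv_mul (x y : triv_ext) : triv_ext :=
  (x.1 * y.1, x.1 *: y.2 + y.1 *: x.2).

Fact triv_mulA : associative triv_mul.
Proof.
move=> [a u] [b v] [c w]; rewrite /triv_mul /=; congr pair; first exact: mulrA.
by rewrite !scalerDr !scalerA addrA [c * a]mulrC [c * b]mulrC.
Qed.

Fact triv_mulC : commutative triv_mul.
Proof. by move=> [a u] [b v]; rewrite /triv_mul /= mulrC addrC. Qed.

Fact triv_mul1 : left_id triv_one triv_mul.
Proof. by move=> [a u]; rewrite /triv_mul /= mul1r scale1r scaler0 addr0. Qed.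

Fact triv_mulDl : left_distributive triv_mul +%R.
Proof.
move=> [a u] [b v] [c w]; rewrite /triv_mul /=; congr pair; first exact: mulrDl.
by rewrite scalerDl scalerDr addrACA.
Qed.

Fact triv_one_neq0 : triv_one != 0.
Proof. by rewrite xpair_eqE oner_eq0. Qed.

HB.instance Definition _ := GRing.Zmodule_isComNzRing.Build triv_ext
  triv_mulA triv_mulC triv_mul1 triv_mulDl triv_one_neq0.

Definition triv_scalar (c : F) : triv_ext := (c, 0).

Fact triv_scalar_is_zmod_morphism : zmod_morphism triv_scalar.
Proof. by move=> a b; congr pair; rewrite subr0. Qed.

Fact triv_scalar_is_monoid_morphism : monoid_morphism triv_scalar.
Proof. by split=> // a b; congr pair; rewrite /= !scaler0 addr0. Qed.

HB.instance Definition _ := GRing.isZmodMorphism.Build F triv_ext triv_scalar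
  triv_scalar_is_zmod_morphism.
HB.instance Definition _ := GRing.isMonoidMorphism.Build F triv_ext triv_scalar
  triv_scalar_is_monoid_morphism.

Definition triv_vec (v : V) : triv_ext := (0, v).

Lemma triv_vec_inj : injective triv_vec.
Proof. by move=> u v []. Qed.

Lemma triv_vec0 : triv_vec 0 = 0.
Proof. by []. Qed.

Lemma triv_vecD u v : triv_vec (u + v) = triv_vec u + triv_vec v.
Proof. by congr pair; rewrite addr0. Qed.

Lemma triv_vecN v : triv_vec (- v) = - triv_vec v.
Proof. by congr pair; rewrite oppr0. Qed.

Lemma triv_vecZ c v : triv_vec (c *: v) = triv_scalar c * triv_vec v.
Proof. by congr pair; rewrite /= (mulr0, scaler0) ?addr0. Qed.

Definition triv_vecE := (triv_vec0, triv_vecD, triv_vecN, triv_vecZ).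

End TrivialExtension.

Lemma linv_eq_rinv (R : pzRingType) (x y z : R) : y * x = 1 -> x * z = 1 -> y = z.
Proof. by move=> yx xz; rewrite -[y]mulr1 -xz mulrA yx mul1r. Qed.

Lemma mulr_add_eq0_iff (R : pzRingType) (x y u u' : R) :
  u * u' = 1 -> x * u + y = 0 -> (x = 0 <-> y = 0).
Proof.
move=> uu' xuy; split=> [x0 | y0]; first by rewrite -xuy x0 mul0r add0r.
by rewrite -[x]mulr1 -uu' mulrA -[x * u]addr0 -y0 xuy mul0r.
Qed.

Section BraidWords.
Variables (R : pzRingType) (a a' b b' : R).
Hypotheses (aa' : a * a' = 1) (a'a : a' * a = 1) (bb' : b * b' = 1) (b'b : b' * b = 1).
Hypothesis braid_ab : a * b * a = b * a * b.

Lemma braid_inv : b' * a' * b' = a' * b' * a'.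
Proof.
apply/esym/(@linv_eq_rinv _ (a * b * a)).
  by rewrite -!mulrA (mulrA a' a) a'a mul1r (mulrA b' b) b'b mul1r a'a.
by rewrite braid_ab -!mulrA (mulrA b b') bb' mul1r (mulrA a a') aa' mul1r bb'.
Qed.

Lemma conj_braid : b' * a * b = a * b * a'.
Proof.
transitivity (b' * (a * b * a) * a'); first by rewrite -!mulrA aa' mulr1.
by rewrite braid_ab !mulrA b'b mul1r.
Qed.

Lemma conj_braid_inv : b' * a' * b = a * b' * a'.
Proof.
apply: (@linv_eq_rinv _ (b' * a * b)).
  by rewrite -!mulrA (mulrA b b') bb' mul1r (mulrA a' a) a'a mul1r b'b.
by rewrite conj_braid -!mulrA (mulrA a' a) a'a mul1r (mulrA b b') bb' mul1r aa'.
Qed.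

Lemma braid_mulVl : a' * b * a * b = b * a.
Proof. by rewrite -!mulrA (mulrA b) -braid_ab !mulrA a'a mul1r. Qed.

Lemma braid_mulVVl : a' * b' * a * b = b * a'.
Proof. by rewrite -!mulrA (mulrA b') conj_braid !mulrA a'a mul1r. Qed.

End BraidWords.

Section KeyIdentity.
Variables (A : algType Qt) (s sb : nat -> A) (i : nat).
Local Notation a := (s i).
Local Notation a' := (sb i).
Local Notation b := (s i.+1).
Local Notation b' := (sb i.+1).
Hypotheses (aa' : a * a' = 1) (a'a : a' * a = 1) (bb' : b * b' = 1) (b'b : b' * b = 1).
Hypothesis braid_ab : a * b * a = b * a * b.
Hypothesis quadratic_b :
  b ^+ 2 + (1 - t0 - t1) *: b + (t0 * t1 - t0 - t1) *: (1 : A) + (t0 * t1) *: b' = 0.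

Lemma relX_mul_add_relY : relX s sb i * s i.+1 + relY s sb i = 0.
Proof.
have sqr_b : b * b = - ((1 - t0 - t1) *: b + (t0 * t1 - t0 - t1) *: 1 + (t0 * t1) *: b').
  by apply/eqP; rewrite -addr_eq0 -expr2 !addrA quadratic_b.
have conj_ab := conj_braid aa' b'b braid_ab.
have conj_ab' := conj_braid_inv aa' a'a bb' b'b braid_ab.
rewrite /relY /relX /relZ /= !(mulrDl, mulrBl, mulNr).
rewrite (braid_mulVl a'a braid_ab) (braid_mulVVl aa' a'a b'b braid_ab).
(* Writing a b a' and a b' a' as b' a b and b' a' b exposes b * b. *)
rewrite -conj_ab -conj_ab' -!(mulrA _ b b) -!(mulrA _ b' b) b'b !mulr1 sqr_b.
rewrite !(mulrDr, mulrN) -!scalerAr !mulr1.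
rewrite -braid_ab conj_ab conj_ab' (braid_inv aa' a'a bb' b'b braid_ab).
by apply: triv_vec_inj; rewrite !triv_vecE; ring.
Qed.

End KeyIdentity.

Theorem lemma2p1 (n i : nat) (hn : (3 <= n)%N) (hi : (1 <= i <= n - 2)%N)
    (A : algType Qt) (s sb : nat -> A) :
  braid_family n s sb -> cubic_rel n s sb ->
  (relX s sb i = 0 <-> relY s sb i = 0).
Proof.
move=> [inv [braid _]] cubic.
have [aa' a'a] : s i * sb i = 1 /\ sb i * s i = 1 by apply: inv; lia.
have [bb' b'b] : s i.+1 * sb i.+1 = 1 /\ sb i.+1 * s i.+1 = 1 by apply: inv; lia.
have braid_ab : s i * s i.+1 * s i = s i.+1 * s i * s i.+1 by apply: braid; lia.
apply: (mulr_add_eq0_iff bb').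
by apply: relX_mul_add_relY => //; apply: cubic; lia.
Qed.
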